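(* Given a network $f$ and an input $\mathbf{x} = \langle x_1, \ldots, x_m \rangle$ where $m \geq 2$, the time complexity of $\textsc{binarySequential}(f, \mathbf{x})$ is $2$ calls of $\textsc{checkValid}$ for the best case (all features are irrelevant) and $k_{2m} = 2 \cdot k_m + 1$ or $k_{2m+1} = k_{m+1} + k_m + 1$ calls of $\textsc{checkValid}$ for the worst case (all features are in explanation). When $m = 1$, it needs $1$ $\textsc{checkValid}$ call.
   Context: $f$ is a neural network (classifier or regressor), $\mathbf{x}$ an input with $m$ features, $\epsilon$ a perturbation magnitude and $p$ a norm. The oracle $\textsc{checkValid}(f, \mathbf{x}, \mathbf{x}_S)$ returns True iff every input obtained from $\mathbf{x}$ by perturbing the features in $\mathbf{x}_S$ within $\epsilon$ (in $p$-norm) while keeping all other features fixed yields the same prediction as $\mathbf{x}$ (same class, or output within $\delta$ for regression); features whose perturbation preserves the prediction are called irrelevant, the others form the explanation. The procedure $\textsc{binarySequential}$ maintains global sets $\mathbf{x}_\mathbf{A}$ (explanation) and $\mathbf{x}_\mathbf{B}$ (irrelevant), both initialized to $\emptyset$, and on candidate features $\mathbf{x}_\Theta$ does: if $|\mathbf{x}_\Theta|=1$, call $\textsc{checkValid}(f,\mathbf{x},\mathbf{x}_\mathbf{B}\cup\mathbf{x}_\Theta)$ and add $\mathbf{x}_\Theta$ to $\mathbf{x}_\mathbf{B}$ if True, else to $\mathbf{x}_\mathbf{A}$. Otherwise split $\mathbf{x}_\Theta$ into two consecutive halves $\mathbf{x}_\Phi,\mathbf{x}_\Psi$ (with $|\mathbf{x}_\Phi|=|\mathbf{x}_\Psi|+1$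 when $|\mathbf{x}_\Theta|$ is odd). If $\textsc{checkValid}(f,\mathbf{x},\mathbf{x}_\mathbf{B}\cup\mathbf{x}_\Phi)$ is True: add $\mathbf{x}_\Phi$ to $\mathbf{x}_\mathbf{B}$; then if $\textsc{checkValid}(f,\mathbf{x},\mathbf{x}_\mathbf{B}\cup\mathbf{x}_\Psi)$ is True add $\mathbf{x}_\Psi$ to $\mathbf{x}_\mathbf{B}$, else if $|\mathbf{x}_\Psi|=1$ add it to $\mathbf{x}_\mathbf{A}$, else recurse on $\mathbf{x}_\Psi$. If instead the check on $\mathbf{x}_\Phi$ is False: if $|\mathbf{x}_\Phi|=1$ add it to $\mathbf{x}_\mathbf{A}$, else recurse on $\mathbf{x}_\Phi$; then recurse on $\mathbf{x}_\Psi$. Here $k_m$ denotes the number of $\textsc{checkValid}$ calls in the worst case for an input of $m$ features. *)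

From mathcomp Require Import all_boot.
Set Implicit Arguments. Unset Strict Implicit. Unset Printing Implicit Defensive.

(* Features of x = <x_1,...,x_m> are represented by their indices 0..m-1
   (the sequence [iota 0 m], in order).  A call checkValid(f, x, x_S) is
   modelled by an abstract boolean oracle [chk : seq nat -> bool] applied
   to the sequence of indices of the perturbed features x_S (f, x, eps, p
   are fixed, so the oracle only depends on the perturbed feature set). *)
Definition oracle := seq nat -> bool.

(* State of binarySequential: (explanation x_A, irrelevant x_B, number of
   checkValid calls made so far). *)
Definition state := (seq nat * seq nat * nat)%type.

(* binarySequential on candidate features T, with fuel (the fuel is the
   recursion bound; starting it at size T is always sufficient). *)
Fixpoint bseq (fuel : nat) (chk : oracle) (st : state) (T : seq nat) : state :=
  match fuel with
  | 0 => st
  | fuel'.+1 =>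
    let: (A, B, c) := st in
    if size T == 1 then
      (if chk (B ++ T) then (A, B ++ T, c.+1) else (A ++ T, B, c.+1))
    else if size T == 0 then st
    else
      let h := uphalf (size T) in        (* |Phi| = |Psi| + 1 when odd *)
      let Phi := take h T in
      let Psi := drop h T in
      if chk (B ++ Phi) then
        let B1 := B ++ Phi in
        if chk (B1 ++ Psi) then (A, B1 ++ Psi, c.+2)
        else if size Psi == 1 then (A ++ Psi, B1, c.+2)
        else bseq fuel' chk (A, B1, c.+2) Psi
      else
        let st1 := if size Phi == 1 then (A ++ Phi, B, c.+1)
                   else bseq fuel' chk (A, B, c.+1) Phi in
        bseq fuel' chk st1 Psi
  end.

Definition binarySequential (chk : oracle) (m : nat) : state :=
  bseq m chk ([::], [::], 0) (iota 0 m).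

Definition ncalls (chk : oracle) (m : nat) : nat := (binarySequential chk m).2.

Definition all_irrelevant (chk : oracle) : Prop := forall S, chk S = true.

(* Worst case: all features in the explanation -- perturbing any nonempty
   set of features can change the prediction, so every query on a nonempty
   feature set fails. *)
Definition all_explanation (chk : oracle) : Prop :=
  forall S, S != [::] -> chk S = false.

(* k_m: number of calls in the worst case, computed with the canonical
   all-explanation oracle (only the empty perturbation is valid). *)
Definition k (m : nat) : nat := ncalls (fun S => S == [::]) m.

From Pilot Require Import Defs.
From mathcomp Require Import all_boot zify.

(* In the best case the checks on both halves of the input succeed, so the
   algorithm stops after two calls.  In the worst case x_B stays empty and
   every call on a nonempty set fails, so the algorithm walks the whole tree
   of binary splits: splitting n >= 2 candidates costs one call on Phi plus
   the cost of both halves, except that a failing singleton Phi goes to x_A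
   without a further call.  Hence k_n = k_(ceil(n/2)) + k_(floor(n/2)) + 1
   for n >= 3, which specialises to the two stated recurrences. *)

Lemma uphalf_half_split n : 2 <= n ->
  [/\ 0 < uphalf n, uphalf n < n, n./2 < n & n - uphalf n = n./2].
Proof.
move=> n_ge2; have := odd_double_half n; rewrite uphalf_half -addnn.
by case: (odd n) => /= n_eq; split; lia.
Qed.

(* Number of calls [bseq] makes on [n] candidates when every nonempty query
   fails, i.e. when x_B stays empty throughout. *)
Fixpoint worst_calls (fuel n : nat) : nat :=
  match fuel with
  | 0 => 0
  | fuel'.+1 =>
    if n == 1 then 1 else if n == 0 then 0 else
    1 + (if uphalf n == 1 then 0 else worst_calls fuel' (uphalf n))
      + worst_calls fuel' n./2
  end.

Lemma worst_callsS fuel n : 2 <= n ->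
  worst_calls fuel.+1 n =
  1 + (if uphalf n == 1 then 0 else worst_calls fuel (uphalf n))
    + worst_calls fuel n./2.
Proof. by case: n => [|[|n]]. Qed.

Lemma worst_calls_fuel f1 f2 n :
  n <= f1 -> n <= f2 -> worst_calls f1 n = worst_calls f2 n.
Proof.
elim: f1 f2 n => [|f1 IH] [|f2] n; rewrite ?leqn0 => le_n_f1 le_n_f2 //.
- by rewrite (eqP le_n_f1); case: f2 le_n_f2.
- by rewrite (eqP le_n_f2).
case: n le_n_f1 le_n_f2 => [|[|n]] // le_n_f1 le_n_f2.
have [_ up_lt half_lt _] := uphalf_half_split n.+2 isT.
rewrite !worst_callsS // (IH f2 (n.+2)./2); [|lia|lia].
by rewrite (IH f2 (uphalf n.+2)); [|lia|lia].
Qed.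

(* Plain [bseq] would denote MathComp's bounded sequences. *)
Lemma bseq_all_explanation fuel chk A c T :
  all_explanation chk -> size T <= fuel ->
  Defs.bseq fuel chk (A, [::], c) T = (A ++ T, [::], c + worst_calls fuel (size T)).
Proof.
move=> chk_expl; elim: fuel A c T => [|fuel IH] A c T.
  by rewrite leqn0 => /nilP ->; rewrite cats0 addn0.
move=> le_T_fuel /=.
have [T_1|T_n1] := eqVneq (size T) 1.
  by rewrite chk_expl ?addn1 //; case: T T_1 {le_T_fuel}.
have [/size0nil ->|T_n0] := eqVneq (size T) 0; first by rewrite cats0 addn0.
have T_ge2 : 2 <= size T by case: (size T) T_n1 T_n0 => [|[|]].
have [up_gt0 up_lt half_lt drop_size] := uphalf_half_split _ T_ge2.
have size_Phi : size (take (uphalf (size T)) T) = uphalf (size T).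
  by rewrite size_takel // ltnW.
have size_Psi : size (drop (uphalf (size T)) T) = (size T)./2.
  by rewrite size_drop drop_size.
rewrite chk_expl; last by rewrite -size_eq0 size_Phi -lt0n.
rewrite size_Phi.
have le_Phi_fuel : uphalf (size T) <= fuel by lia.
have le_Psi_fuel : (size T)./2 <= fuel by lia.
case: eqP => [_|_]; last rewrite IH size_Phi //.
all: rewrite IH size_Psi // -catA cat_take_drop.
all: by congr (_, _, _); lia.
Qed.

Lemma ncalls_all_explanation m chk :
  all_explanation chk -> ncalls chk m = worst_calls m m.
Proof.
move=> chk_expl.
by rewrite /ncalls /binarySequential bseq_all_explanation ?size_iota.
Qed.

Lemma k_worst_calls m : k m = worst_calls m m.
Proof. by apply: ncalls_all_explanation => S /negbTE. Qed.

Lemma k_split n : 3 <= n -> k n = k (uphalf n) + k n./2 + 1.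
Proof.
case: n => // n n_ge3.
have [_ up_lt half_lt _] := uphalf_half_split _ (ltnW n_ge3).
have up_n1 : uphalf n.+1 != 1 by rewrite uphalfE; lia.
rewrite !k_worst_calls worst_callsS ?(ltnW n_ge3) // (negbTE up_n1).
by rewrite (@worst_calls_fuel n (uphalf n.+1)) ?(@worst_calls_fuel n n.+1./2); lia.
Qed.

Lemma ncalls_one chk : ncalls chk 1 = 1.
Proof. by rewrite /ncalls /binarySequential /=; case: (chk _). Qed.

Lemma ncalls_all_irrelevant m chk :
  2 <= m -> all_irrelevant chk -> ncalls chk m = 2.
Proof.
by case: m => [|[|m]] // _ chk_irr; rewrite /ncalls /binarySequential /= !chk_irr.
Qed.

Theorem theorem1 :
  (* m = 1: exactly one checkValid call *)
  (forall chk : oracle, ncalls chk 1 = 1) /\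
  (* best case, m >= 2: two calls *)
  (forall (m : nat) (chk : oracle), 2 <= m -> all_irrelevant chk ->
     ncalls chk m = 2) /\
  (* worst case: the number of calls is k_m *)
  (forall (m : nat) (chk : oracle), all_explanation chk -> ncalls chk m = k m) /\
  (* recurrences for k, m >= 2 *)
  (forall m : nat, 2 <= m ->
     k (2 * m) = 2 * k m + 1 /\ k (2 * m + 1) = k (m + 1) + k m + 1).
Proof.
split; first exact: ncalls_one.
split; first exact: ncalls_all_irrelevant.
split; first by move=> m chk /ncalls_all_explanation ->; rewrite k_worst_calls.
move=> m m_ge2; rewrite mul2n.
have [up_even half_even] : uphalf m.*2 = m /\ (m.*2)./2 = m.
  by rewrite uphalf_double doubleK.
have [up_odd half_odd] : uphalf (m.*2 + 1) = m + 1 /\ (m.*2 + 1)./2 = m.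
  by rewrite addn1 /= uphalf_double doubleK addn1.
by split; rewrite k_split ?up_even ?half_even ?up_odd ?half_odd; lia.
Qed.
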